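(* Let $n$ be a positive integer. The set $$\Big\{\tbinom{n}{k}\big(a^{\otimes k}\otimes(a^c)^{\otimes(n-k)}\big)^\vee\ :\ k=0,\ldots,n\Big\}$$ is a complete set of primitive orthogonal idempotents in $\mathrm{Sym}^n\mathbb{C}[e_1]$.
   Context: $\mathbb{C}[e_1]=\mathbb{R}[e_1]\otimes_\mathbb{R}\mathbb{C}$ is the commutative $\mathbb{C}$-algebra with basis $1,e_1$ and $e_1^2=-1$. $\mathbb{C}[e_1]^{\otimes n}$ is the $n$-fold tensor power over $\mathbb{C}$ with componentwise multiplication; $\mathfrak S_n$ acts by $\sigma(x_1\otimes\cdots\otimes x_n)=x_{\sigma^{-1}(1)}\otimes\cdots\otimes x_{\sigma^{-1}(n)}$; $x^\vee=\frac1{n!}\sum_{\sigma\in\mathfrak S_n}\sigma(x)$; $\mathrm{Sym}^n\mathbb{C}[e_1]$ is the subalgebra of fixed tensors. $a=\frac12(1+\sqrt{-1}e_1)$, $a^c=\frac12(1-\sqrt{-1}e_1)$. In a unital associative ring: idempotent $x^2=x$; orthogonal means pairwise products zero; a nonzero idempotent is primitive if not a sum of two nonzero orthogonal idempotents; a set of orthogonal idempotents is complete if it sums to $1$. *)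

From HB Require Import structures.
From mathcomp Require Import all_boot all_order all_fingroup all_algebra.
Set Implicit Arguments. Unset Strict Implicit. Unset Printing Implicit Defensive.
Import Order.TTheory GRing.Theory Num.Theory.
Local Open Scope ring_scope.

(* Concrete model of C[e1]^{(x) n} over C (any numClosedFieldType, e.g. the
   complex numbers): an element is its coordinate vector in the basis of pure
   tensors e_S := y_1 (x) ... (x) y_n with y_i = e1 if i \in S, y_i = 1 else.
   Componentwise multiplication gives e_S e_T = (-1)^{|S :&: T|} e_{S (+) T}. *)

Section TensorModel.
Variables (C : numClosedFieldType) (n : nat).

Definition tens := {ffun {set 'I_n} -> C}.

(* elements of C[e1]: pair (alpha, beta) stands for alpha + beta e1 *)
Definition ce1 := (C * C)%type.

Definition tmul (x y : tens) : tens :=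
  [ffun U => \sum_(S : {set 'I_n})
       x S * y ((S :\: U) :|: (U :\: S)) * (-1) ^+ #|S :&: ((S :\: U) :|: (U :\: S))|].

Definition tone : tens := [ffun U => (U == set0)%:R].

Definition tscale (c : C) (x : tens) : tens := [ffun U => c * x U].

Definition pure (x : 'I_n -> ce1) : tens :=
  [ffun S : {set 'I_n} => \prod_(i < n) (if i \in S then (x i).2 else (x i).1)].

(* sigma (x_1 (x) ... (x) x_n) = x_{sigma^-1 1} (x) ... ; on basis: e_S |-> e_{sigma S} *)
Definition tact (s : 'S_n) (x : tens) : tens := [ffun U : {set 'I_n} => x ((s^-1)%g @: U)].

Definition symz (x : tens) : tens :=
  tscale (n`!%:R)^-1 (\sum_(s : 'S_n) tact s x).

Definition in_Sym (x : tens) : Prop := forall s : 'S_n, tact s x = x.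

Definition idem (x : tens) : Prop := tmul x x = x.
Definition orth (x y : tens) : Prop := tmul x y = 0 /\ tmul y x = 0.

Definition primitive_Sym (x : tens) : Prop :=
  in_Sym x /\ x <> 0 /\ idem x /\
  ~ (exists y z : tens, in_Sym y /\ in_Sym z /\ y <> 0 /\ z <> 0 /\
        idem y /\ idem z /\ orth y z /\ x = y + z).

Definition a_el : ce1 := (2^-1, 'i / 2).
Definition ac_el : ce1 := (2^-1, - 'i / 2).

Definition Ek (k : nat) : tens :=
  tscale ('C(n, k))%:R
    (symz (pure (fun i : 'I_n => if (i < k)%N then a_el else ac_el))).

End TensorModel.

(* The characters of C[e1]^{(x)n}: C[e1] = C[X]/(X^2+1) is isomorphic to C x C
   through e1 |-> -i and e1 |-> i, so C[e1]^{(x)n} is isomorphic to C^(2^n), with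
   one character chi_T per subset T of the factors (e1 |-> -i on T, i elsewhere).
   The character of the pure tensor a^{(x)k} (x) (a^c)^{(x)(n-k)} is the
   indicator of T = {0, ..., k-1}; symmetrisation averages over the orbit of T,
   and the normalisation binom(n,k) is forced by sum_T chi_T(x) = 2^n x_{empty},
   so that chi_T(E_k) = [|T| = k].  Since the characters separate points, the
   E_k are orthogonal idempotents summing to 1.  A symmetric element has a
   character that only depends on |T|, so a symmetric idempotent below E_k is
   0 or E_k: the E_k are primitive. *)

From HB Require Import structures.
From mathcomp Require Import all_boot all_order all_fingroup all_algebra.
From mathcomp Require Import alt primitive_action ring.
Set Implicit Arguments. Unset Strict Implicit. Unset Printing Implicit Defensive.
Import Order.TTheory GRing.Theory Num.Theory.
Local Open Scope ring_scope.

Lemma card_eq_perm_imset (T : finType) (A B : {set T}) :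
  #|A| = #|B| -> exists s : {perm T}, s @: A = B.
Proof.
move=> eqAB.
have trans := ntransitive_weak (max_card (mem A)) (Sym_trans T).
have sizeB : size (enum B) == #|A| by rewrite -cardE eqAB.
have [||s _ sAB] := atransP2 trans (x := enum_tuple A) (y := Tuple sizeB).
- by rewrite inE enum_uniq; apply/subsetP.
- by rewrite inE enum_uniq; apply/subsetP.
exists s; apply/setP => x.
have -> : (x \in B) = (x \in val (Tuple sizeB)) by rewrite /= mem_enum.
rewrite sAB /=.
by apply/imsetP/mapP => -[y]; rewrite ?mem_enum => yA ->; exists y; rewrite ?mem_enum.
Qed.

Section Characters.
Variables (C : numClosedFieldType) (n : nat).
Local Notation tens := (tens C n).
Implicit Types (x y z : tens) (S T U V : {set 'I_n}).

Definition e1_at T i : C := if i \in T then - 'i else 'i.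

Definition chi T x : C := \sum_S x S * \prod_(i in S) e1_at T i.

Definition symdiff S U := (S :\: U) :|: (U :\: S).

Lemma symdiffK S : involutive (symdiff S).
Proof. by move=> V; apply/setP => i; rewrite !inE; case: (i \in S); case: (i \in V). Qed.

Lemma e1_at_sqr T i : e1_at T i * e1_at T i = -1.
Proof. by rewrite -expr2 /e1_at; case: ifP; rewrite ?sqrrN sqrCi. Qed.

Lemma prod_e1_at_symdiff T S V :
  (-1) ^+ #|S :&: V| * \prod_(i in symdiff S V) e1_at T i
  = \prod_(i in S) e1_at T i * \prod_(i in V) e1_at T i.
Proof.
rewrite -prodr_const !(big_mkcond (fun i => i \in _)) -!big_split /=.
apply: eq_bigr => i _; rewrite !inE.
by case: (i \in S); case: (i \in V); rewrite /= ?mulr1 ?mul1r ?e1_at_sqr.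
Qed.

Lemma chi_tmul T x y : chi T (tmul x y) = chi T x * chi T y.
Proof.
rewrite /chi big_distrl /=.
under eq_bigr => U _ do rewrite ffunE big_distrl.
rewrite exchange_big /=; apply: eq_bigr => S _.
rewrite big_distrr /= (reindex_inj (inv_inj (symdiffK S))) /=.
apply: eq_bigr => V _; rewrite -/(symdiff S _) symdiffK.
by rewrite -mulrA prod_e1_at_symdiff; ring.
Qed.

Lemma prod_eqb_mem S U : \prod_i ((i \in S) == (i \in U))%:R = (S == U)%:R :> C.
Proof.
have [<-|neqSU] := eqVneq; first by rewrite big1 // => i _; rewrite eqxx.
have [i Si] : exists i, (i \in S) != (i \in U).
  apply/existsP; apply: contraR neqSU => /existsPn eqSU.
  by apply/eqP/setP => i; apply/eqP/negPn.
by rewrite (bigD1 i) //= (negbTE Si) mul0r.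
Qed.

(* The characters are orthogonal: -e1_at T i is the inverse of e1_at T i. *)
Lemma sum_chi_basis S U :
  \sum_T (\prod_(i in S) e1_at T i) * \prod_(i in U) - e1_at T i
  = (S == U)%:R * 2%:R ^+ n.
Proof.
pose g b i : C := (if i \in S then e1_at (if b then setT else set0) i else 1)
                * (if i \in U then - e1_at (if b then setT else set0) i else 1).
transitivity (\sum_(T : {set 'I_n}) \prod_i (if i \in T then g true i else g false i)).
  apply: eq_bigr => T _; rewrite !(big_mkcond (fun i => i \in _)) -big_split /=.
  by apply: eq_bigr => i _; rewrite /g /e1_at !inE; case: (i \in T).
have -> : 2%:R ^+ n = \prod_(i < n) 2%:R :> C by rewrite prodr_const card_ord.
rewrite -bigA_distr -prod_eqb_mem -big_split /=.
apply: eq_bigr => i _; rewrite /g /e1_at !inE.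
case: (i \in S); case: (i \in U); rewrite /= ?mulr1 ?mul1r ?mul0r ?opprK ?subrr //.
- by rewrite mulrN mulNr -expr2 sqrCi opprK.
- by rewrite addrC subrr.
Qed.

Lemma chi_inversion x U :
  \sum_T chi T x * \prod_(i in U) - e1_at T i = 2%:R ^+ n * x U.
Proof.
under eq_bigr => T _ do rewrite /chi big_distrl.
rewrite exchange_big /=.
under eq_bigr => S _.
  under eq_bigr => T _ do rewrite -mulrA.
  by rewrite -mulr_sumr sum_chi_basis; over.
rewrite (bigD1 U) //= eqxx mul1r big1 ?addr0 => [|S /negbTE ->]; last by rewrite !mul0r mulr0.
exact: mulrC.
Qed.

Lemma chi_inj x y : (forall T, chi T x = chi T y) -> x = y.
Proof.
move=> eq_chi; apply/ffunP => U; apply: (@mulfI _ (2%:R ^+ n)).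
  by rewrite expf_neq0 // pnatr_eq0.
by rewrite -!chi_inversion; apply: eq_bigr => T _; rewrite eq_chi.
Qed.

Lemma sum_chi x : \sum_T chi T x = 2%:R ^+ n * x set0.
Proof. by rewrite -chi_inversion; apply: eq_bigr => T _; rewrite big_set0 mulr1. Qed.

Lemma chi0 T : chi T 0 = 0.
Proof. by rewrite /chi big1 // => S _; rewrite ffunE mul0r. Qed.

Lemma chiD T x y : chi T (x + y) = chi T x + chi T y.
Proof. by rewrite /chi -big_split; apply: eq_bigr => S _; rewrite ffunE mulrDl. Qed.

Lemma chi_sum T (I : finType) (F : I -> tens) : chi T (\sum_i F i) = \sum_i chi T (F i).
Proof. exact: (big_morph (chi T) (chiD T) (chi0 T)). Qed.

Lemma chi_tscale T c x : chi T (tscale c x) = c * chi T x.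
Proof. by rewrite /chi mulr_sumr; apply: eq_bigr => S _; rewrite ffunE mulrA. Qed.

Lemma chi_tone T : chi T (tone C n) = 1.
Proof.
rewrite /chi (bigD1 set0) //= ffunE eqxx mul1r big_set0 big1 ?addr0 //.
by move=> S /negbTE nS; rewrite ffunE nS mul0r.
Qed.

Lemma chi_pure T f : chi T (pure f) = \prod_i ((f i).1 + (f i).2 * e1_at T i).
Proof.
rewrite (eq_bigr _ (fun i _ => addrC _ _)) bigA_distr; apply: eq_bigr => S _.
rewrite ffunE (big_mkcond (fun i => i \in S)) -big_split /=.
by apply: eq_bigr => i _; case: ifP; rewrite ?mulr1.
Qed.

Lemma mem_imset_permV (s : 'S_n) T i : (i \in (s^-1)%g @: T) = (s i \in T).
Proof. by rewrite -{1}(permK s i) mem_imset //; exact: perm_inj. Qed.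

Lemma imset_permK (s : 'S_n) T : (s^-1)%g @: (s @: T) = T.
Proof. by apply/setP => i; rewrite mem_imset_permV mem_imset //; exact: perm_inj. Qed.

Lemma chi_tact T (s : 'S_n) x : chi T (tact s x) = chi ((s^-1)%g @: T) x.
Proof.
rewrite /chi (reindex_inj (imset_inj (@perm_inj _ s))) /=.
apply: eq_bigr => V _; rewrite ffunE imset_permK; congr (_ * _).
rewrite (reindex_inj (@perm_inj _ s)) /=; apply: eq_big => [i|i _].
  by rewrite mem_imset //; exact: perm_inj.
by rewrite /e1_at mem_imset_permV.
Qed.

Lemma chi_symz T x : chi T (symz x) = (n`!%:R)^-1 * \sum_(s : 'S_n) chi ((s^-1)%g @: T) x.
Proof. by rewrite /symz chi_tscale chi_sum; under eq_bigr do rewrite chi_tact. Qed.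

Lemma tact_symz (s : 'S_n) x : tact s (symz x) = symz x.
Proof.
apply: chi_inj => T; rewrite chi_tact !chi_symz; congr (_ * _).
have imsetM (t : 'S_n) : (t^-1)%g @: ((s^-1)%g @: T) = ((t * s)^-1)%g @: T.
  by apply/setP => i; rewrite !mem_imset_permV permM.
by under eq_bigr do rewrite imsetM; rewrite [RHS](reindex_inj (mulIg s)).
Qed.

Lemma tact_tscale (s : 'S_n) c x : tact s (tscale c x) = tscale c (tact s x).
Proof. by apply/ffunP => U; rewrite !ffunE. Qed.

Lemma symz_set0 x : symz x set0 = x set0.
Proof.
rewrite !ffunE sum_ffunE (eq_bigr (fun _ => x set0)) => [|s _]; last by rewrite ffunE imset0.
rewrite sumr_const card_Sn -(mulr_natl (x set0)) mulrA mulVf ?mul1r //.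
by rewrite pnatr_eq0 -lt0n fact_gt0.
Qed.

Lemma chi_sym_card x T T' : in_Sym x -> #|T| = #|T'| -> chi T x = chi T' x.
Proof.
move=> symx /card_eq_perm_imset [s <-].
by rewrite -{1}(symx (s^-1)%g) chi_tact invgK.
Qed.

Lemma sym_chi_eq0 y T0 :
  in_Sym y -> chi T0 y = 0 -> (forall T, #|T| != #|T0| -> chi T y = 0) -> y = 0.
Proof.
move=> symy y0 off; apply: chi_inj => T; rewrite chi0.
by have [/(chi_sym_card symy)->|/off] := eqVneq #|T| #|T0|.
Qed.

Lemma chi_idem T y : idem y -> chi T y = 0 \/ chi T y = 1.
Proof.
move=> idy; have /eqP : chi T y * (chi T y - 1) = 0.
  by rewrite mulrBr mulr1 -chi_tmul idy subrr.
by rewrite mulf_eq0 subr_eq0 => /orP[] /eqP; [left | right].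
Qed.

Lemma chi_orth_idem T y z : idem y -> tmul y z = 0 -> chi T y = chi T y * chi T (y + z).
Proof. by move=> idy yz; rewrite chiD mulrDr -!chi_tmul idy yz chi0 addr0. Qed.

Definition ak k (i : 'I_n) : ce1 C := if (i < k)%N then a_el C else ac_el C.

Definition set_ltn k := [set i : 'I_n | (i < k)%N].

Lemma card_set_ltn k : (k <= n)%N -> #|set_ltn k| = k.
Proof.
move=> le_kn; rewrite -sum1_card (eq_bigl (fun i : 'I_n => (i < k)%N)) => [|i]; last first.
  by rewrite inE.
by rewrite -(big_ord_widen _ (fun _ => 1%N) le_kn) sum1_card card_ord.
Qed.

Lemma chi_pure_ak T k : chi T (pure (ak k)) = (set_ltn k == T)%:R.
Proof.
rewrite chi_pure -prod_eqb_mem; apply: eq_bigr => i _; rewrite inE /ak /a_el /ac_el /e1_at.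
have ii : 'i * 'i = -1 :> C by rewrite -expr2 sqrCi.
by case: (i < k)%N; case: (i \in T); rewrite /= ?mulrN ?mulNr ?opprK mulrAC ii; field.
Qed.

Lemma chi_symz_ak_eq0 T k : (k <= n)%N -> #|T| != k -> chi T (symz (pure (ak k))) = 0.
Proof.
move=> le_kn neq; rewrite chi_symz big1 ?mulr0 // => s _; rewrite chi_pure_ak.
case: eqP => // eqT; move: neq.
by rewrite -(card_set_ltn le_kn) eqT card_imset ?eqxx //; exact: perm_inj.
Qed.

Lemma Ek_sym k : in_Sym (Ek C n k).
Proof. by move=> s; rewrite /Ek tact_tscale tact_symz. Qed.

(* The value of chi on the level |T| = k is pinned down by sum_chi. *)
Lemma chi_Ek T k : (k <= n)%N -> chi T (Ek C n k) = (#|T| == k)%:R.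
Proof.
move=> le_kn; rewrite chi_tscale.
have [cardT|] := eqVneq; last by move/(chi_symz_ak_eq0 le_kn) ->; rewrite mulr0.
set v := chi T _.
have level T' : chi T' (symz (pure (ak k))) = (#|T'| == k)%:R * v.
  have [cardT'|/(chi_symz_ak_eq0 le_kn)->] := eqVneq; last by rewrite mul0r.
  by rewrite mul1r; apply: (chi_sym_card (fun s => tact_symz s _)); rewrite cardT cardT'.
have pure_set0 : pure (ak k) set0 = 2^-1 ^+ n.
  rewrite ffunE (eq_bigr (fun _ => 2^-1)) ?prodr_const ?card_ord // => i _.
  by rewrite in_set0 /ak; case: ifP.
have card_level : (\sum_(T' : {set 'I_n}) (#|T'| == k))%N = 'C(n, k).
  by rewrite -[in RHS](card_ord n) -card_draws -sum1dep_card [RHS]big_mkcond.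
have := sum_chi (symz (pure (ak k))).
rewrite symz_set0 pure_set0 -exprMn divff ?pnatr_eq0 // expr1n.
under eq_bigr do rewrite level.
by rewrite -mulr_suml -natr_sum card_level => ->.
Qed.

Lemma Ek_neq0 k : (k <= n)%N -> Ek C n k <> 0.
Proof.
move=> le_kn Ek0; have := chi_Ek (set_ltn k) le_kn.
by rewrite Ek0 chi0 card_set_ltn // eqxx => /esym/eqP; rewrite pnatr_eq0.
Qed.

Lemma Ek_idem k : (k <= n)%N -> idem (Ek C n k).
Proof. by move=> le_kn; apply: chi_inj => T; rewrite chi_tmul chi_Ek // -natrM mulnb andbb. Qed.

Lemma Ek_orth k l : (k <= n)%N -> (l <= n)%N -> k != l -> orth (Ek C n k) (Ek C n l).
Proof.
move=> le_kn le_ln neq_kl.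
have disj T : ((#|T| == k) && (#|T| == l)) = false.
  by apply: contraNF neq_kl => /andP[/eqP <- /eqP <-].
by split; apply: chi_inj => T;
  rewrite chi_tmul !chi_Ek // chi0 -natrM mulnb // ?disj // andbC disj.
Qed.

Lemma sum_Ek : \sum_(k < n.+1) Ek C n k = tone C n.
Proof.
apply: chi_inj => T; rewrite chi_sum chi_tone.
under eq_bigr => k _ do rewrite (chi_Ek T (leq_ord k)).
have cardT : (#|T| < n.+1)%N by rewrite ltnS; apply: leq_trans (max_card _) _; rewrite card_ord.
rewrite (bigD1 (Ordinal cardT)) //= eqxx big1 ?addr0 // => k.
by rewrite -val_eqE /= eq_sym => /negbTE ->.
Qed.

Lemma Ek_primitive k : (k <= n)%N -> primitive_Sym (Ek C n k).
Proof.
move=> le_kn; split; [exact: Ek_sym | split; [exact: Ek_neq0 | split; [exact: Ek_idem |]]].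
move=> [y [z [sy [sz [y0 [z0 [idy [idz [[yz zy] defE]]]]]]]]].
have below w : in_Sym w -> (forall T, chi T w = chi T w * chi T (Ek C n k)) ->
    chi (set_ltn k) w = 0 -> w = 0.
  move=> sw w_le w_0; apply: (sym_chi_eq0 sw w_0) => T.
  by rewrite card_set_ltn // w_le chi_Ek // => /negbTE ->; rewrite mulr0.
have [y_0|y_1] := chi_idem (set_ltn k) idy.
  by apply/y0/(below _ sy _ y_0) => T; rewrite defE; exact: chi_orth_idem.
apply/z0/(below _ sz) => [T|].
  by rewrite defE addrC; exact: chi_orth_idem.
by apply: (@addrI _ 1); rewrite addr0 -{1}y_1 -chiD -defE chi_Ek // card_set_ltn // eqxx.
Qed.

End Characters.

Theorem lemma3p2 (C : numClosedFieldType) (n : nat) (hn : (0 < n)%N) :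
  [/\ (forall k : 'I_n.+1, primitive_Sym (Ek C n k)),
      (forall k l : 'I_n.+1, k != l -> orth (Ek C n k) (Ek C n l))
    & \sum_(k < n.+1) Ek C n k = tone C n].
Proof.
split.
- by move=> k; apply/Ek_primitive/leq_ord.
- by move=> k l neq_kl; apply: Ek_orth; rewrite ?leq_ord.
- exact: sum_Ek.
Qed.
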